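(* Let $A\in\mathbb{Z}^{m\times n}$ have full column rank, $b\in\mathbb{Z}^m$, $c\in\mathbb{Q}^n$, and let $x^*$ be an optimal vertex of $\max\{c^\top x: Ax\le b,\ x\in\mathbb{R}^n\}$, where the integer program $\max\{c^\top x: Ax\le b,\ x\in\mathbb{Z}^n\}$ is feasible. Then there exist an optimal solution $z^*$ of this integer program, an integral matrix $\bar A$ whose rows are rows of $A$ or their negatives, and an integral vector $\bar b$ such that $\{x:\bar Ax\le\bar b\}\subseteq\{x:Ax\le b\}$, $x^*$ is a vertex of $\{x:\bar Ax\le \bar b\}$, and $\{x:\bar Ax\le\bar b\}\cap\mathbb{Z}^n=\{z^*\}$. *)

From HB Require Import structures.
From mathcomp Require Import all_boot all_order all_algebra.
From mathcomp Require Import reals.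
Set Implicit Arguments. Unset Strict Implicit. Unset Printing Implicit Defensive.
Import Order.TTheory GRing.Theory Num.Theory.
Local Open Scope ring_scope.

Section Defs.
Variable R : realType.

Definition imx (m n : nat) (A : 'M[int]_(m, n)) : 'M[R]_(m, n) := map_mx intr A.
Definition qmx (m n : nat) (A : 'M[rat]_(m, n)) : 'M[R]_(m, n) := map_mx ratr A.

Definition polyh (m n : nat) (A : 'M[int]_(m, n)) (b : 'cV[int]_m) (x : 'cV[R]_n) : Prop :=
  forall i : 'I_m, (imx A *m x) i 0 <= (imx b) i 0.

Definition obj (n : nat) (c : 'cV[rat]_n) (x : 'cV[R]_n) : R := ((qmx c)^T *m x) 0 0.

Definition is_vertex (n : nat) (P : 'cV[R]_n -> Prop) (x : 'cV[R]_n) : Prop :=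
  P x /\ forall y z : 'cV[R]_n, P y -> P z ->
    forall t : R, 0 < t -> t < 1 -> x = t *: y + (1 - t) *: z -> y = x /\ z = x.

Definition lp_optimal (m n : nat) (A : 'M[int]_(m, n)) (b : 'cV[int]_m) (c : 'cV[rat]_n)
  (x : 'cV[R]_n) : Prop :=
  polyh A b x /\ forall y, polyh A b y -> obj c y <= obj c x.

Definition ip_feasible (m n : nat) (A : 'M[int]_(m, n)) (b : 'cV[int]_m) (z : 'cV[int]_n) : Prop :=
  polyh A b (imx z).

Definition ip_optimal (m n : nat) (A : 'M[int]_(m, n)) (b : 'cV[int]_m) (c : 'cV[rat]_n)
  (z : 'cV[int]_n) : Prop :=
  ip_feasible A b z /\
  forall w : 'cV[int]_n, ip_feasible A b w -> obj c (imx w) <= obj c (imx z).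

End Defs.

From HB Require Import structures.
From mathcomp Require Import all_boot all_order all_algebra.
From mathcomp Require Import reals.
From mathcomp Require Import zify ring lra.
From Stdlib Require Import Classical.
Import Order.TTheory GRing.Theory Num.Theory.
Local Open Scope ring_scope.

(* Let Q(z) be the smallest box, in the coordinates y |-> Ay, that contains the integer
   point z and the integral rounding of x*: lo_i = min(A_i z, ⌊A_i x*⌋) and
   hi_i = max(A_i z, ⌈A_i x*⌉).  When z is feasible, Q(z) lies in {Ax <= b}
   (b is integral) and contains x*, so x* stays a vertex of Q(z).  For integer points
   y, z of Q(z), a row with A_i z > A_i y is slack at x*: if A_i x* = b_i then
   lo_i = A_i z > A_i y.  Hence z - y is a feasible direction at x*, and LP
   optimality gives c^T z <= c^T y: every integer point of the box of an IP optimum is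
   again an IP optimum.  If moreover z lies in Q(y), both x* + e(y - z) and
   x* - e(y - z) are feasible and the vertex property forces y = z; otherwise Q(y) is
   strictly smaller than Q(z).  So the IP optimum with the smallest box is the only
   integer point of its box. *)

Lemma ex_argmin_nat {T : Type} {P : T -> Prop} (f : T -> nat) :
  (exists t, P t) -> exists t, P t /\ forall u, P u -> (f t <= f u)%N.
Proof.
move=> [t0 Pt0].
suff: forall k t, P t -> (f t <= k)%N ->
    exists t, P t /\ forall u, P u -> (f t <= f u)%N by apply; [exact: Pt0|].
elim=> [|k IH] t Pt le_ft_k.
  by exists t; split=> // u _; lia.
have [[u [Pu lt_ut]]|no_smaller] := classic (exists u, P u /\ (f u < f t)%N).
  by apply: (IH u Pu); lia.
exists t; split=> // u Pu; rewrite leqNgt; apply/negP => lt_ut.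
by apply: no_smaller; exists u.
Qed.

Lemma ex_argmax_int {T : Type} {P : T -> Prop} (f : T -> int) (B : int) :
  (exists t, P t) -> (forall t, P t -> f t <= B) ->
  exists t, P t /\ forall u, P u -> f u <= f t.
Proof.
move=> exP le_fB.
have [t [Pt min_t]] := ex_argmin_nat (fun t => absz (B - f t)) exP.
exists t; split=> // u Pu.
by have := min_t u Pu; have := le_fB u Pu; have := le_fB t Pt; lia.
Qed.

Lemma rat_mx_int_scaled {p q : nat} (c : 'M[rat]_(p, q)) :
  exists2 d : int, 0 < d & exists ci : 'M[int]_(p, q), c = (d%:~R)^-1 *: map_mx intr ci.
Proof.
pose den (k : 'I_p * 'I_q) := denq (c k.1 k.2).
exists (\prod_k den k); first by apply: prodr_gt0 => k _; exact: denq_gt0.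
exists (\matrix_(i, j) (numq (c i j) * \prod_(k | k != (i, j)) den k)).
apply/matrixP => i j; rewrite !mxE (bigD1 (i, j)) //= !rmorphM.
have rest_neq0 : (\prod_(k | k != (i, j)) den k)%:~R != 0 :> rat.
  by rewrite intr_eq0 lt0r_neq0 // prodr_gt0 // => k _; exact: denq_gt0.
by rewrite invfM mulrACA mulVf // mulr1 mulrC divq_num_den.
Qed.

Section Polyhedra.
Context {R : realType}.

Lemma imxE {p q : nat} (M : 'M[int]_(p, q)) i j : imx R M i j = (M i j)%:~R.
Proof. exact: mxE. Qed.

Lemma imx_mulmxE {p q : nat} (M : 'M[int]_(p, q)) (w : 'cV[int]_q) i :
  (imx R M *m imx R w) i 0 = ((M *m w) i 0)%:~R.
Proof. by rewrite /imx -map_mxM mxE. Qed.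

Lemma imx_mulmxBE {p q : nat} (M : 'M[int]_(p, q)) (z y : 'cV[int]_q) i :
  (imx R M *m (imx R z - imx R y)) i 0 = ((M *m z) i 0 - (M *m y) i 0)%:~R.
Proof. by rewrite mulmxBr [LHS]mxE [X in _ + X]mxE !imx_mulmxE rmorphB. Qed.

Lemma ip_feasibleE {m n : nat} (A : 'M[int]_(m, n)) (b : 'cV[int]_m) w :
  ip_feasible R A b w <-> forall i, (A *m w) i 0 <= b i 0.
Proof.
split=> feas i; first by move: (feas i); rewrite imx_mulmxE imxE ler_int.
by rewrite imx_mulmxE imxE ler_int; exact: feas.
Qed.

Lemma objDZ {n : nat} (c : 'cV[rat]_n) (x d : 'cV[R]_n) (t : R) :
  obj c (x + t *: d) = obj c x + t * obj c d.
Proof. by rewrite /obj mulmxDr -scalemxAr !mxE. Qed.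

Lemma objB {n : nat} (c : 'cV[rat]_n) (x y : 'cV[R]_n) :
  obj c (x - y) = obj c x - obj c y.
Proof. by rewrite /obj mulmxBr !mxE. Qed.

Lemma obj_imx {n : nat} {c : 'cV[rat]_n} {d : int} {ci : 'cV[int]_n} :
  c = (d%:~R)^-1 *: map_mx intr ci ->
  forall w, obj c (imx R w) = ((ci^T *m w) 0 0)%:~R / d%:~R.
Proof.
move=> -> w; rewrite /obj.
have -> : (qmx R ((d%:~R)^-1 *: map_mx intr ci))^T = (d%:~R)^-1 *: (imx R ci)^T.
  by apply/matrixP => i j; rewrite !mxE rmorphM fmorphV /= !ratr_int.
by rewrite -scalemxAl mxE /imx map_trmx -map_mxM mxE mulrC.
Qed.

Lemma polyh_dir {m n : nat} {A : 'M[int]_(m, n)} {b : 'cV[int]_m} {x : 'cV[R]_n}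
    (d : 'cV[R]_n) :
  polyh A b x ->
  (forall i, 0 < (imx R A *m d) i 0 -> (imx R A *m x) i 0 < (imx R b) i 0) ->
  exists2 e : R, 0 < e & forall t, 0 <= t <= e -> polyh A b (x + t *: d).
Proof.
move=> Px slack.
pose e := \big[Order.min/1]_(i | 0 < (imx R A *m d) i 0)
  (((imx R b) i 0 - (imx R A *m x) i 0) / (imx R A *m d) i 0).
exists e.
  apply/bigmin_gtP; split=> // i Adi.
  by rewrite divr_gt0 // subr_gt0; exact: slack.
move=> t /andP[t_ge0 t_le_e] i; have Pxi := Px i.
have e_le : 0 < (imx R A *m d) i 0 ->
    e <= ((imx R b) i 0 - (imx R A *m x) i 0) / (imx R A *m d) i 0.
  exact: bigmin_le_cond.
rewrite mulmxDr -scalemxAr.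
move: (imx R A *m x) (imx R A *m d) Pxi e_le => Ax Ad Pxi e_le.
rewrite !mxE in Pxi e_le *.
have [Adi_le0|Adi_gt0] := lerP (Ad i 0) 0.
  by have := mulr_ge0_le0 t_ge0 Adi_le0; lra.
have := le_trans t_le_e (e_le Adi_gt0).
by rewrite ler_pdivlMr //; lra.
Qed.

Lemma polyh_col_mxN {m n : nat} (A : 'M[int]_(m, n)) (l u : 'cV[int]_m) (x : 'cV[R]_n) :
  polyh (col_mx A (- A)) (col_mx u (- l)) x <->
  forall i, (l i 0)%:~R <= (imx R A *m x) i 0 <= (u i 0)%:~R.
Proof.
rewrite /polyh.
have -> : imx R (col_mx A (- A)) *m x = col_mx (imx R A *m x) (- (imx R A *m x)).
  by rewrite /imx map_col_mx map_mxN mul_col_mx mulNmx.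
move: (imx R A *m x) => Ax; split=> [Px i | lu_x r].
  have := Px (lshift m i); have := Px (rshift m i).
  by rewrite !imxE !col_mxEu !col_mxEd !mxE rmorphN lerN2 => -> ->.
rewrite imxE -(splitK r); case: (split r) => i /=.
  by rewrite !col_mxEu; case/andP: (lu_x i).
by rewrite !col_mxEd !mxE rmorphN lerN2; case/andP: (lu_x i).
Qed.

Lemma ip_optimal_exists {m n : nat} (A : 'M[int]_(m, n)) (b : 'cV[int]_m)
    (c : 'cV[rat]_n) (M : R) :
  (exists z, ip_feasible R A b z) ->
  (forall z, ip_feasible R A b z -> obj c (imx R z) <= M) ->
  exists z, ip_optimal R A b c z.
Proof.
move=> exfeas obj_le_M.
have [d d_gt0 [ci c_scaled]] := rat_mx_int_scaled c.
have objE := obj_imx c_scaled.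
have d_R_gt0 : 0 < d%:~R :> R by rewrite ltr0z.
have [w /obj_le_M|z [z_feas z_max]] := ex_argmax_int (fun w => (ci^T *m w) 0 0)
    (Num.floor (M * d%:~R)) exfeas.
  by rewrite objE ler_pdivrMr // floor_ge_int.
exists z; split=> // w w_feas.
by rewrite !objE ler_pM2r ?invr_gt0 // ler_int; exact: z_max.
Qed.

End Polyhedra.

Lemma row_col_mxN {R : pzRingType} {m n : nat} (A : 'M[R]_(m, n)) (r : 'I_(m + m)) :
  exists i, row r (col_mx A (- A)) = row i A \/ row r (col_mx A (- A)) = - row i A.
Proof.
rewrite -(splitK r); case: (split r) => i /=; exists i; first by left; rewrite rowKu.
by right; rewrite rowKd; apply/rowP => j; rewrite !mxE.
Qed.

Lemma is_vertex_sub {R : realType} {n : nat} (P Q : 'cV[R]_n -> Prop) (x : 'cV[R]_n) :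
  (forall y, P y -> Q y) -> P x -> is_vertex Q x -> is_vertex P x.
Proof. by move=> PQ Px [_ ext_x]; split=> // y z /PQ Qy /PQ Qz; exact: ext_x. Qed.

Section Box.
Context {R : realType} {m n : nat} (A : 'M[int]_(m, n)) (b : 'cV[int]_m)
  (c : 'cV[rat]_n) (xs : 'cV[R]_n).

Definition box_lo (z : 'cV[int]_n) : 'cV[int]_m :=
  \col_i Num.min ((A *m z) i 0) (Num.floor ((imx R A *m xs) i 0)).

Definition box_hi (z : 'cV[int]_n) : 'cV[int]_m :=
  \col_i Num.max ((A *m z) i 0) (Num.ceil ((imx R A *m xs) i 0)).

Lemma box_loE z i : box_lo z i 0 = Num.min ((A *m z) i 0) (Num.floor ((imx R A *m xs) i 0)).
Proof. exact: mxE. Qed.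

Lemma box_hiE z i : box_hi z i 0 = Num.max ((A *m z) i 0) (Num.ceil ((imx R A *m xs) i 0)).
Proof. exact: mxE. Qed.

Definition box_rhs (z : 'cV[int]_n) : 'cV[int]_(m + m) := col_mx (box_hi z) (- box_lo z).

Definition in_box (z y : 'cV[int]_n) : Prop :=
  forall i, box_lo z i 0 <= (A *m y) i 0 <= box_hi z i 0.

Definition box_width (z : 'cV[int]_n) : nat :=
  \sum_i absz (box_hi z i 0 - box_lo z i 0)%R.

Lemma in_boxE z y : ip_feasible R (col_mx A (- A)) (box_rhs z) y <-> in_box z y.
Proof.
split=> [/polyh_col_mxN box_y i | box_y]; last apply/polyh_col_mxN => i.
  by have := box_y i; rewrite imx_mulmxE !ler_int.
by rewrite imx_mulmxE !ler_int; exact: box_y.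
Qed.

Lemma in_box_refl z : in_box z z.
Proof. by move=> i; rewrite box_loE box_hiE; lia. Qed.

Lemma box_polyh_xs z : polyh (col_mx A (- A)) (box_rhs z) xs.
Proof.
apply/polyh_col_mxN => i; rewrite !mxE; apply/andP; split.
  by apply: le_trans (floor_le _); rewrite ler_int ge_min lexx orbT.
by apply: le_trans (ceil_ge _) _; rewrite ler_int le_max lexx orbT.
Qed.

Lemma box_width_lt z y : in_box z y -> ~ in_box y z -> (box_width y < box_width z)%N.
Proof.
move=> z_y not_y_z; rewrite /in_box in z_y not_y_z.
have [j out_j] := not_all_ex_not _ _ not_y_z.
rewrite /box_width (bigD1 j) //= [X in (_ < X)%N](bigD1 j) //= -addSn.
apply: leq_add; first by have := z_y j; move: out_j; rewrite !box_loE !box_hiE; lia.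
by apply: leq_sum => i _; have := z_y i; rewrite !box_loE !box_hiE; lia.
Qed.

Lemma floor_lt_slack i : Num.floor ((imx R A *m xs) i 0) < b i 0 ->
  (imx R A *m xs) i 0 < (imx R b) i 0.
Proof. by rewrite imxE floor_lt_int. Qed.

Hypothesis xs_feas : polyh A b xs.

Lemma ceil_le_rhs i : Num.ceil ((imx R A *m xs) i 0) <= b i 0.
Proof. by rewrite ceil_le_int -imxE; exact: xs_feas. Qed.

Lemma box_sub_polyh z : ip_feasible R A b z ->
  forall x : 'cV[R]_n, polyh (col_mx A (- A)) (box_rhs z) x -> polyh A b x.
Proof.
move=> /ip_feasibleE z_feas x /polyh_col_mxN box_x i; rewrite imxE.
case/andP: (box_x i) => _ /le_trans; apply; rewrite ler_int box_hiE.
by have := z_feas i; have := ceil_le_rhs i; lia.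
Qed.

Hypothesis xs_opt : lp_optimal A b c xs.

Lemma in_box_obj_le {z y} : ip_feasible R A b z -> in_box z y ->
  obj c (imx R z) <= obj c (imx R y).
Proof.
move=> /ip_feasibleE z_feas z_y.
have [|e e_gt0 dir_feas] := polyh_dir (imx R z - imx R y) xs_feas.
  move=> i; rewrite imx_mulmxBE ltr0z => Ad_gt0; apply: floor_lt_slack.
  by have := z_y i; have := z_feas i; rewrite box_loE box_hiE; lia.
have feas_e : polyh A b (xs + e *: (imx R z - imx R y)).
  by apply: dir_feas; rewrite lexx ltW.
have := proj2 xs_opt _ feas_e.
by rewrite objDZ objB gerDl pmulr_rle0 // subr_le0.
Qed.

Hypothesis xs_vertex : is_vertex (polyh A b) xs.

Lemma in_box_antisym z y : in_box z y -> in_box y z -> y = z.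
Proof.
move=> z_y y_z.
have slack i : (A *m y) i 0 != (A *m z) i 0 ->
    (imx R A *m xs) i 0 < (imx R b) i 0.
  move=> neq; apply: floor_lt_slack; move: neq.
  have := z_y i; have := y_z i; have := ceil_le_rhs i.
  by rewrite !box_loE !box_hiE; lia.
have [|e1 e1_gt0 feas1] := polyh_dir (imx R y - imx R z) xs_feas.
  by move=> i; rewrite imx_mulmxBE ltr0z => ?; apply: slack; lia.
have [|e2 e2_gt0 feas2] := polyh_dir (imx R z - imx R y) xs_feas.
  by move=> i; rewrite imx_mulmxBE ltr0z => ?; apply: slack; lia.
pose e := Num.min e1 e2.
have e_gt0 : 0 < e by rewrite lt_min e1_gt0 e2_gt0.
have xs_mid : xs = 2^-1 *: (xs + e *: (imx R y - imx R z))
                   + (1 - 2^-1) *: (xs + e *: (imx R z - imx R y)).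
  by apply/matrixP => i j; rewrite !mxE; field.
have [||||moved _] := proj2 xs_vertex _ _ _ _ (2^-1) _ _ xs_mid.
- by apply: feas1; rewrite ltW //= ge_min lexx.
- by apply: feas2; rewrite ltW //= ge_min lexx orbT.
- by rewrite invr_gt0.
- by rewrite invf_lt1 // ltr1n.
have : e *: (imx R y - imx R z) = 0 by apply: (addrI xs); rewrite addr0.
move/eqP; rewrite scaler_eq0 (negbTE (lt0r_neq0 e_gt0)) subr_eq0 => /eqP yz.
apply/matrixP => i j; apply: (@intr_inj R).
by have := congr1 (fun M : 'cV[R]_n => M i j) yz; rewrite !imxE.
Qed.

Lemma box_int_points zs : ip_optimal R A b c zs ->
  (forall y, ip_optimal R A b c y -> (box_width zs <= box_width y)%N) ->
  forall y, ip_feasible R (col_mx A (- A)) (box_rhs zs) y <-> y = zs.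
Proof.
move=> [zs_feas zs_max] zs_min y.
split=> [/in_boxE zs_y | ->]; last exact/in_boxE/in_box_refl.
have y_feas : ip_feasible R A b y.
  exact: box_sub_polyh zs_feas _ (proj2 (in_boxE zs y) zs_y).
have y_opt : ip_optimal R A b c y.
  split=> // w /zs_max w_le; exact: le_trans w_le (in_box_obj_le zs_feas zs_y).
have [y_zs|not_y_zs] := classic (in_box y zs); first exact: in_box_antisym.
by have := zs_min y y_opt; rewrite leqNgt box_width_lt.
Qed.

End Box.

Theorem lemma8 (R : realType) (m n : nat) (A : 'M[int]_(m, n)) (b : 'cV[int]_m)
  (c : 'cV[rat]_n) (xs : 'cV[R]_n) :
  \rank (imx R A) = n ->
  is_vertex (polyh A b) xs ->
  lp_optimal A b c xs ->
  (exists z : 'cV[int]_n, ip_feasible R A b z) ->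
  exists (zs : 'cV[int]_n) (k : nat) (Ab : 'M[int]_(k, n)) (bb : 'cV[int]_k),
    [/\ ip_optimal R A b c zs,
        (forall r : 'I_k, exists i : 'I_m, row r Ab = row i A \/ row r Ab = - row i A),
        (forall x : 'cV[R]_n, polyh Ab bb x -> polyh A b x),
        is_vertex (polyh Ab bb) xs
      & (forall z : 'cV[int]_n, ip_feasible R Ab bb z <-> z = zs)].
Proof.
move=> _ xs_vertex xs_opt ip_feas.
have xs_feas := proj1 xs_opt.
have [z0 z0_opt] := ip_optimal_exists A b c (obj c xs) ip_feas (fun z => proj2 xs_opt _).
have [zs [zs_opt zs_min]] :=
  ex_argmin_nat (box_width A xs) (ex_intro (ip_optimal R A b c) z0 z0_opt).
have box_sub := box_sub_polyh A b xs xs_feas zs (proj1 zs_opt).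
exists zs, (m + m)%N, (col_mx A (- A)), (box_rhs A xs zs); split=> //.
- exact: row_col_mxN.
- exact: is_vertex_sub box_sub (box_polyh_xs A xs zs) xs_vertex.
- exact: box_int_points A b c xs xs_feas xs_opt xs_vertex zs zs_opt zs_min.
Qed.
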